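(* Let $P_1$ be the uniform distribution on $[0,\frac12]$, let $P_2$ be the uniform distribution on $[\frac34,1]$, and let $P=\frac34P_1+\frac14P_2$. Then the set $\{\frac14,\frac78\}$ is an optimal set of two-means for $P$, and the corresponding quantization error is $V_2=\frac{13}{768}$.
   Context: For a finite set $\alpha\subset\mathbb R$, $V(P;\alpha)=\int\min_{a\in\alpha}(x-a)^2\,dP(x)$; $V_n=\inf\{V(P;\alpha):\mathrm{card}(\alpha)\le n\}$; an optimal set of $n$-means is a set $\alpha$ with $\mathrm{card}(\alpha)\le n$ and $V(P;\alpha)=V_n$. *)

From Stdlib Require Import Reals List.
From Coquelicot Require Import Coquelicot.
Open Scope R_scope.

Definition E_unif (a b : R) (f : R -> R) : R := / (b - a) * RInt f a b.

Definition E_P (f : R -> R) : R :=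
  3/4 * E_unif 0 (1/2) f + 1/4 * E_unif (3/4) 1 f.

(* A finite set alpha of reals, represented by a nonempty list
   (a0 :: l); card(alpha) <= n  <->  some list of length <= n lists it. *)
Definition min_sqdist (a0 : R) (l : list R) (x : R) : R :=
  fold_right (fun a m => Rmin ((x - a)^2) m) ((x - a0)^2) l.

Definition Vq (a0 : R) (l : list R) : R := E_P (min_sqdist a0 l).

Definition Vn (n : nat) : Rbar :=
  Glb_Rbar (fun v => exists a0 l, (length (a0 :: l) <= n)%nat /\ v = Vq a0 l).

From Stdlib Require Import Reals List Lra Lia FunctionalExtensionality.
From Coquelicot Require Import Coquelicot.
Open Scope R_scope.

(* For centres a <= b the cost splits at the Voronoi boundary m = (a+b)/2,
   so V(P;{a,b}) is a piecewise polynomial in a and b.  Moving a centre to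
   the midpoint of its cell only lowers the integral of (x-c)^2 (parallel
   axis theorem).  If m lies outside both supports, this leaves at least the
   within-support variance 3/4 * 1/48 + 1/4 * 1/192 = 13/768, attained by
   {1/4, 7/8}.  If m falls inside a support, multiplying by the mass of the
   cluster that straddles the gap turns the remaining bound into a sum of
   squares. *)

Definition sqdist_int (c s t : R) : R := ((t - c)^3 - (s - c)^3) / 3.

Lemma is_RInt_sqdist c s t : is_RInt (fun x => (x - c)^2) s t (sqdist_int c s t).
Proof.
  replace (sqdist_int c s t) with ((t - c)^3 / 3 - (s - c)^3 / 3)
    by (unfold sqdist_int; field).
  apply (is_RInt_derive (fun x => (x - c)^3 / 3)).
  - intros x _. auto_derive; [easy | field].
  - intros x _. apply continuity_pt_filterlim. reg.
Qed.

Lemma sqdist_int_parallel_axis c s t :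
  sqdist_int c s t = (t - s) * (c - (s + t) / 2)^2 + (t - s)^3 / 12.
Proof. unfold sqdist_int; field. Qed.

Lemma sqdist_int_ge c s t : s <= t -> (t - s)^3 / 12 <= sqdist_int c s t.
Proof.
  intros hst. rewrite sqdist_int_parallel_axis.
  assert (0 <= (t - s) * (c - (s + t) / 2)^2)
    by (apply Rmult_le_pos; [lra | apply pow2_ge_0]).
  lra.
Qed.

Lemma sqdist_int_point c s : sqdist_int c s s = 0.
Proof. unfold sqdist_int; field. Qed.

Lemma min_sqdist_pair_left a b x :
  a <= b -> x <= (a + b) / 2 -> min_sqdist a (b :: nil) x = (x - a)^2.
Proof. intros hab hx. apply Rmin_right. nra. Qed.

Lemma min_sqdist_pair_right a b x :
  a <= b -> (a + b) / 2 <= x -> min_sqdist a (b :: nil) x = (x - b)^2.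
Proof. intros hab hx. apply Rmin_left. nra. Qed.

Lemma min_sqdist_pair_comm a b : min_sqdist a (b :: nil) = min_sqdist b (a :: nil).
Proof. apply functional_extensionality; intros x. apply Rmin_comm. Qed.

Lemma min_sqdist_nil a : min_sqdist a nil = min_sqdist a (a :: nil).
Proof.
  apply functional_extensionality; intros x. symmetry. apply Rmin_left, Rle_refl.
Qed.

Definition voronoi_cut (a b u c v : R) : Prop :=
  u <= c <= v /\ (u < c -> c <= (a + b) / 2) /\ (c < v -> (a + b) / 2 <= c).

Lemma voronoi_cut_below a b u v : (a + b) / 2 <= u <= v -> voronoi_cut a b u u v.
Proof. unfold voronoi_cut. intros h. repeat split; intros; lra. Qed.

Lemma voronoi_cut_inside a b u v :
  u <= (a + b) / 2 <= v -> voronoi_cut a b u ((a + b) / 2) v.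
Proof. unfold voronoi_cut. intros h. repeat split; intros; lra. Qed.

Lemma voronoi_cut_above a b u v : u <= v <= (a + b) / 2 -> voronoi_cut a b u v v.
Proof. unfold voronoi_cut. intros h. repeat split; intros; lra. Qed.

Ltac solve_voronoi_cut :=
  first [ lra
        | apply voronoi_cut_inside; lra
        | apply voronoi_cut_below; lra
        | apply voronoi_cut_above; lra ].

Lemma is_RInt_min_sqdist_pair a b u c v :
  a <= b -> voronoi_cut a b u c v ->
  is_RInt (min_sqdist a (b :: nil)) u v (sqdist_int a u c + sqdist_int b c v).
Proof.
  intros hab [[huc hcv] [hleft hright]].
  apply (is_RInt_Chasles (V := R_NormedModule) _ u c v).
  - apply is_RInt_ext with (fun x => (x - a)^2); [| apply is_RInt_sqdist].
    rewrite Rmin_left, Rmax_right by lra. intros x hx.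
    symmetry; apply min_sqdist_pair_left; [exact hab |].
    specialize (hleft ltac:(lra)). lra.
  - apply is_RInt_ext with (fun x => (x - b)^2); [| apply is_RInt_sqdist].
    rewrite Rmin_left, Rmax_right by lra. intros x hx.
    symmetry; apply min_sqdist_pair_right; [exact hab |].
    specialize (hright ltac:(lra)). lra.
Qed.

Lemma Vq_pair a b c d :
  a <= b -> voronoi_cut a b 0 c (1/2) -> voronoi_cut a b (3/4) d 1 ->
  Vq a (b :: nil) =
    3/2 * (sqdist_int a 0 c + sqdist_int b c (1/2))
    + (sqdist_int a (3/4) d + sqdist_int b d 1).
Proof.
  intros hab hc hd. unfold Vq, E_P, E_unif.
  rewrite (is_RInt_unique _ _ _ _ (is_RInt_min_sqdist_pair _ _ _ _ _ hab hc)).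
  rewrite (is_RInt_unique _ _ _ _ (is_RInt_min_sqdist_pair _ _ _ _ _ hab hd)).
  field.
Qed.

Lemma separated_cost_ge x y : 13/768 <= 3/2 * sqdist_int x 0 (1/2) + sqdist_int y (3/4) 1.
Proof.
  pose proof (sqdist_int_ge x 0 (1/2) ltac:(lra)).
  pose proof (sqdist_int_ge y (3/4) 1 ltac:(lra)).
  lra.
Qed.

(* m^3/8 is the least cost of the cell [0,m]; k = 1 - 3m/2 is the P-mass of the
   cell [m,1/2] u [3/4,1], and k times the cost is completed to a square in b. *)
Lemma straddling_right_cluster_cost_ge m b : 0 <= m <= 1/2 ->
  13/768 <= m^3/8 + 3/2 * sqdist_int b m (1/2) + sqdist_int b (3/4) 1.
Proof.
  intros hm. set (k := 1 - 3 * m / 2).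
  assert (sos : k * (m^3/8 + 3/2 * sqdist_int b m (1/2) + sqdist_int b (3/4) 1 - 13/768)
              = (k * b - (13/32 - 3 * m^2 / 4))^2
                + (1/2 - m) * (3/8 * (m - 9/16)^2 + 57/2048))
    by (unfold k, sqdist_int; field).
  assert (0 <= (1/2 - m) * (3/8 * (m - 9/16)^2 + 57/2048)) by nra.
  pose proof (pow2_ge_0 (k * b - (13/32 - 3 * m^2 / 4))).
  assert (hk : 0 < k) by (unfold k; lra).
  nra.
Qed.

(* (1-m)^3/12 is the least cost of the cell [m,1]; m is the P-mass of the cell
   [0,1/2] u [3/4,m]. *)
Lemma straddling_left_cluster_cost_ge m a : 3/4 <= m <= 1 ->
  13/768 <= 3/2 * sqdist_int a 0 (1/2) + sqdist_int a (3/4) m + (1 - m)^3/12.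
Proof.
  intros hm.
  assert (sos : m * (3/2 * sqdist_int a 0 (1/2) + sqdist_int a (3/4) m
                     + (1 - m)^3/12 - 13/768)
              = (m * a - (m^2/2 - 3/32))^2 + (m - 3/4) * (m^2/4 + m/32 + 3/256))
    by (unfold sqdist_int; field).
  assert (0 <= (m - 3/4) * (m^2/4 + m/32 + 3/256)) by nra.
  pose proof (pow2_ge_0 (m * a - (m^2/2 - 3/32))).
  nra.
Qed.

Lemma Vq_pair_ge a b : a <= b -> 13/768 <= Vq a (b :: nil).
Proof.
  intros hab.
  destruct (Rle_dec ((a + b) / 2) 0).
  { rewrite (Vq_pair a b 0 (3/4)) by solve_voronoi_cut.
    rewrite !sqdist_int_point. pose proof (separated_cost_ge b b). lra. }
  destruct (Rle_dec ((a + b) / 2) (1/2)).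
  { rewrite (Vq_pair a b ((a + b) / 2) (3/4)) by solve_voronoi_cut.
    rewrite sqdist_int_point. pose proof (sqdist_int_ge a 0 ((a + b) / 2) ltac:(lra)).
    pose proof (straddling_right_cluster_cost_ge ((a + b) / 2) b ltac:(lra)). lra. }
  destruct (Rle_dec ((a + b) / 2) (3/4)).
  { rewrite (Vq_pair a b (1/2) (3/4)) by solve_voronoi_cut.
    rewrite !sqdist_int_point. pose proof (separated_cost_ge a b). lra. }
  destruct (Rle_dec ((a + b) / 2) 1).
  { rewrite (Vq_pair a b (1/2) ((a + b) / 2)) by solve_voronoi_cut.
    rewrite sqdist_int_point. pose proof (sqdist_int_ge b ((a + b) / 2) 1 ltac:(lra)).
    pose proof (straddling_left_cluster_cost_ge ((a + b) / 2) a ltac:(lra)). lra. }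
  rewrite (Vq_pair a b (1/2) 1) by solve_voronoi_cut.
  rewrite !sqdist_int_point. pose proof (separated_cost_ge a a). lra.
Qed.

Lemma Vq_ge a0 l : (length (a0 :: l) <= 2)%nat -> 13/768 <= Vq a0 l.
Proof.
  intros hl. destruct l as [| b [| c l]]; simpl in hl; [| | lia].
  - replace (Vq a0 nil) with (Vq a0 (a0 :: nil))
      by (unfold Vq; now rewrite min_sqdist_nil).
    apply Vq_pair_ge, Rle_refl.
  - destruct (Rle_dec a0 b); [now apply Vq_pair_ge |].
    replace (Vq a0 (b :: nil)) with (Vq b (a0 :: nil))
      by (unfold Vq; now rewrite min_sqdist_pair_comm).
    apply Vq_pair_ge; lra.
Qed.

Lemma Vq_optimal : Vq (1/4) (7/8 :: nil) = 13/768.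
Proof.
  rewrite (Vq_pair _ _ (1/2) (3/4)) by solve_voronoi_cut.
  unfold sqdist_int; field.
Qed.

Theorem lemma3p3 :
  Vn 2 = Finite (Vq (1/4) (7/8 :: nil)) /\ Vq (1/4) (7/8 :: nil) = 13/768.
Proof.
  split; [| exact Vq_optimal].
  unfold Vn. apply is_glb_Rbar_unique. split.
  - intros v [a0 [l [hl ->]]]. rewrite Vq_optimal. now apply Vq_ge.
  - intros y hy. apply hy. now exists (1/4), (7/8 :: nil).
Qed.
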